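(* Let $f$ be a Boolean function, let $a$ be a truth assignment to a superset of $var(f)$, let $x\in var(f)$, and let $\ell\in\{x,\overline{x}\}$ be the literal on $x$ satisfied by $a$. Then $$\textit{SR}(f,a)=\{t\wedge\ell\mid t\in\textit{SR}(f|\ell,a),\ t\not\models f|\overline{\ell}\}\ \cup\ \textit{SR}(f|\overline{x}\wedge f|x,\,a).$$
   Context: A term is a conjunction of literals; $t$ is an implicant of $f$ if $t\models f$, and a prime implicant if no term obtained from $t$ by deleting one literal is an implicant of $f$. $var(f)$ is the set of variables of $f$. For a literal $\ell$ on $x$, $f|\ell$ is the Boolean function over $var(f)\setminus\{x\}$ obtained by fixing $x$ so that $\ell$ is true. For a Boolean function $f$ and an assignment $a$ to a superset of $var(f)$, $\textit{SR}(f,a)$ denotes the set of prime implicants of $f$ that are satisfied by $a$ (the sufficient reasons for $a$ given $f$ when $a$ satisfies $f$). *)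

From mathcomp Require Import all_boot.
Set Implicit Arguments. Unset Strict Implicit. Unset Printing Implicit Defensive.

Section BoolFun.
Variable V : finType.

Definition assignment := {ffun V -> bool}.
Definition bfun := assignment -> bool.

(* f depends only on the variables in X (X plays the role of var(f)). *)
Definition depends_only (f : bfun) (X : {set V}) : Prop :=
  forall s s' : assignment, (forall v, v \in X -> s v = s' v) -> f s = f s'.

(* literal (v, b): v if b = true, negation of v if b = false *)
Definition lit := (V * bool)%type.
Definition neg_lit (l : lit) : lit := (l.1, ~~ l.2).
(* a term is a conjunction of literals, represented by its set of literals *)
Definition term := {set lit}.

Definition sat_lit (s : assignment) (l : lit) : bool := s l.1 == l.2.
Definition sat_term (s : assignment) (t : term) : bool :=
  [forall l in t, sat_lit s l].

Definition implicant (t : term) (f : bfun) : bool :=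
  [forall s : assignment, sat_term s t ==> f s].

Definition prime_implicant (t : term) (f : bfun) : bool :=
  implicant t f && [forall l in t, ~~ implicant (t :\ l) f].

Definition SR (f : bfun) (a : assignment) : {set term} :=
  [set t : term | prime_implicant t f && sat_term a t].

Definition restrict (f : bfun) (l : lit) : bfun :=
  fun s => f [ffun v => if v == l.1 then l.2 else s v].

Definition bconj (f g : bfun) : bfun := fun s => f s && g s.
End BoolFun.

From mathcomp Require Import all_boot.
Set Implicit Arguments. Unset Strict Implicit. Unset Printing Implicit Defensive.

(* Split the prime implicants of f satisfied by a according to whether they
   mention x.  A term t free of x implies f iff it implies both cofactors
   f|x and f|~x, so the prime implicants free of x are exactly those of
   f|~x /\ f|x.  A prime implicant mentioning x contains the literal l
   satisfied by a, and t /\ l implies f iff t implies f|l; its primality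
   amounts to primality of t for f|l together with the irredundancy of l,
   i.e. t does not already imply f|~l.  Conversely, the prime implicants
   of the cofactors (which do not depend on x) never mention x when they
   are satisfied by a. *)

Section PrimeImplicantsCofactors.
Variable V : finType.
Implicit Types (f g h : bfun V) (s a : assignment V) (t : term V) (l : lit V).
Implicit Types (x : V) (b : bool) (X : {set V}).

Definition upd s x b : assignment V := [ffun v => if v == x then b else s v].

Definition term_vars t : {set V} := [set l.1 | l in t].

Lemma restrictE f x b s : restrict f (x, b) s = f (upd s x b).
Proof. by []. Qed.

Lemma upd_id s x : upd s x (s x) = s.
Proof. by apply/ffunP => v; rewrite ffunE; case: eqP => // ->. Qed.

Lemma term_varsPn x t :
  reflect (forall l, l \in t -> l.1 != x) (x \notin term_vars t).
Proof.
apply: (iffP idP) => [xNt l lt | tNx].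
  by apply: contraNneq xNt => <-; apply: imset_f.
by apply/imsetP => -[l lt xl]; move: (tNx l lt); rewrite xl eqxx.
Qed.

Lemma notin_term_varsS x t t' :
  t' \subset t -> x \notin term_vars t -> x \notin term_vars t'.
Proof. by move=> /imsetS/subsetP sub; apply: contra; apply: sub. Qed.

Lemma sat_termU s t t' : sat_term s (t :|: t') = sat_term s t && sat_term s t'.
Proof.
apply/forall_inP/andP => [sat | [/forall_inP sat /forall_inP sat'] l].
  by split; apply/forall_inP => l lt; apply: sat; rewrite inE lt ?orbT.
by rewrite inE => /orP[]; [apply: sat | apply: sat'].
Qed.

Lemma sat_term1 s l : sat_term s [set l] = sat_lit s l.
Proof.
apply/forall_inP/idP => [|sl l']; first by apply; rewrite inE.
by rewrite inE => /eqP ->.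
Qed.

Lemma sat_termS s t t' : t' \subset t -> sat_term s t -> sat_term s t'.
Proof.
by move=> /subsetP sub /forall_inP sat; apply/forall_inP => l /sub; apply: sat.
Qed.

Lemma sat_term_upd s x b t :
  x \notin term_vars t -> sat_term (upd s x b) t = sat_term s t.
Proof.
move=> /term_varsPn tNx; apply: eq_forallb => l; case lt: (l \in t) => //=.
by rewrite /sat_lit ffunE (negbTE (tNx l lt)).
Qed.

Lemma sat_term_lit_var a t l :
  sat_term a t -> l \in t -> l = (l.1, a l.1).
Proof. by move=> /forall_inP sat /sat; case: l => v c /eqP /= ->. Qed.

Lemma implicant_bconj t g h :
  implicant t (bconj g h) = implicant t g && implicant t h.
Proof.
apply/forall_inP/andP => [imp | [/forall_inP imp_g /forall_inP imp_h] s st].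
  by split; apply/forall_inP => s /imp /andP[].
by apply/andP; split; [apply: imp_g | apply: imp_h].
Qed.

Section FreeOfVariable.
Variables (f : bfun V) (x : V).

Definition cofactor_conj : bfun V :=
  bconj (restrict f (x, false)) (restrict f (x, true)).

Lemma implicant_free t :
  x \notin term_vars t -> implicant t f = implicant t cofactor_conj.
Proof.
move=> tNx; apply/forall_inP/forall_inP => imp s st.
  by apply/andP; split; rewrite restrictE imp ?sat_term_upd.
have /andP[f0 f1] := imp s st.
by rewrite -(upd_id s x); case: (s x).
Qed.

Lemma implicant_cofactors b t : x \notin term_vars t ->
  implicant t f =
  implicant t (restrict f (x, b)) && implicant t (restrict f (x, ~~ b)).
Proof.
by move=> tNx; rewrite implicant_free // implicant_bconj; case: b; rewrite // andbC.
Qed.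

Lemma implicant_addlit b t : x \notin term_vars t ->
  implicant (t :|: [set (x, b)]) f = implicant t (restrict f (x, b)).
Proof.
move=> tNx; apply/forall_inP/forall_inP => imp s.
  move=> st; apply: imp.
  by rewrite sat_termU sat_term1 sat_term_upd // st /sat_lit ffunE !eqxx.
rewrite sat_termU sat_term1 => /andP[st /eqP /= sx].
by have := imp s st; rewrite restrictE -sx upd_id.
Qed.

Lemma prime_implicant_free t : x \notin term_vars t ->
  prime_implicant t f = prime_implicant t cofactor_conj.
Proof.
move=> tNx; rewrite /prime_implicant implicant_free //; congr andb.
apply: eq_forallb => l; congr (_ ==> ~~ _); apply: implicant_free.
by apply: notin_term_varsS tNx; apply: subsetDl.
Qed.

Lemma prime_implicant_addlit b t : x \notin term_vars t ->
  prime_implicant (t :|: [set (x, b)]) f =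
  prime_implicant t (restrict f (x, b)) && ~~ implicant t (restrict f (x, ~~ b)).
Proof.
move=> tNx; set xb := (x, b).
have xbNt : xb \notin t by apply/negP => /(term_varsPn _ _ tNx); rewrite eqxx.
have drop_xb : (t :|: [set xb]) :\ xb = t by rewrite setUC setU1K.
have drop_lit l : l \in t -> (t :|: [set xb]) :\ l = (t :\ l) :|: [set xb].
  move=> lt; rewrite setDUl; congr (_ :|: _); apply/setP => l'.
  rewrite !inE; case: (l' =P xb) => [-> | _]; rewrite ?andbT ?andbF //.
  by apply: contraNneq xbNt => ->.
have tlNx l : x \notin term_vars (t :\ l).
  by apply: notin_term_varsS tNx; apply: subsetDl.
rewrite /prime_implicant implicant_addlit //.
apply/andP/andP => [[imp /forall_inP prime] | [/andP[imp /forall_inP prime] nimp]].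
  split; last first.
    have := prime xb; rewrite drop_xb inE set11 orbT (implicant_cofactors b) //.
    by rewrite imp => /(_ isT).
  apply/andP; split=> //; apply/forall_inP => l lt.
  by have := prime l; rewrite inE lt drop_lit // implicant_addlit //; apply.
split=> //; apply/forall_inP => l; rewrite inE => /orP[lt | /set1P ->].
  by rewrite drop_lit // implicant_addlit //; apply: prime.
by rewrite drop_xb (implicant_cofactors b) // imp.
Qed.

End FreeOfVariable.

Lemma restrict_depends_off f x b : depends_only (restrict f (x, b)) (~: [set x]).
Proof.
move=> s s' agree; rewrite !restrictE; congr f; apply/ffunP => v; rewrite !ffunE.
by case: eqP => // /eqP vNx; apply: agree; rewrite !inE.
Qed.

Lemma bconj_depends g h X :
  depends_only g X -> depends_only h X -> depends_only (bconj g h) X.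
Proof. by move=> dg dh s s' agree; rewrite /bconj (dg s s') // (dh s s'). Qed.

Lemma sat_term_notin_varsD1 a t x :
  sat_term a t -> x \notin term_vars (t :\ (x, a x)).
Proof.
move=> sat; apply/term_varsPn => l /setD1P[lNxa lt].
by apply: contraNneq lNxa => lx; rewrite (sat_term_lit_var sat lt) lx.
Qed.

(* Consistency of t, guaranteed by [sat_term a t], is needed: the
   contradictory term {x, ~x} is a prime implicant of the constant false. *)
Lemma SR_notin_term_vars g x a t :
  depends_only g (~: [set x]) -> t \in SR g a -> x \notin term_vars t.
Proof.
rewrite inE => gx /andP[/andP[imp /forall_inP prime] sat].
apply/term_varsPn => l lt; apply/negP => /eqP lx.
have /negP := prime l lt; apply; apply/forall_inP => s st.
have sat_upd : sat_term (upd s x l.2) t.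
  apply/forall_inP => l' l't; rewrite /sat_lit ffunE.
  case: ifP => [/eqP l'x | /negbT l'Nx].
    by rewrite (sat_term_lit_var sat lt) (sat_term_lit_var sat l't) /= l'x lx.
  apply: (forall_inP st); rewrite !inE l't andbT.
  by apply: contraNneq l'Nx => ->; rewrite lx eqxx.
have <- : g (upd s x l.2) = g s.
  by apply: gx => v; rewrite !inE ffunE => /negbTE ->.
exact: (forall_inP imp).
Qed.

End PrimeImplicantsCofactors.

Theorem proposition15 (V : finType) (X : {set V}) (f : bfun V)
    (Hf : depends_only f X) (a : assignment V) (x : V) (hx : x \in X) :
  let l : lit V := (x, a x) in
  SR f a =
    [set t :|: [set l] | t in SR (restrict f l) a
                       & ~~ implicant t (restrict f (neg_lit l))]
    :|: SR (bconj (restrict f (x, false)) (restrict f (x, true))) a.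
Proof.
move=> l; rewrite -/(cofactor_conj f x).
have conj_off : depends_only (cofactor_conj f x) (~: [set x]).
  by apply: bconj_depends; apply: restrict_depends_off.
apply/setP => t; rewrite in_setU; apply/idP/orP.
- rewrite [t \in SR f a]inE => /andP[prime sat].
  have tlNx := sat_term_notin_varsD1 x sat.
  case: (boolP (l \in t)) => [lt | lNt]; [left | right].
    have def_t : t = (t :\ l) :|: [set l] by rewrite setUC setD1K.
    rewrite def_t prime_implicant_addlit // in prime.
    case/andP: prime => prime nimp; rewrite def_t; apply: imset_f.
    by rewrite !inE prime nimp (sat_termS (subD1set t l)).
  have tNx : x \notin term_vars t.
    by apply: notin_term_varsS tlNx; rewrite subsetD1 subxx.
  by rewrite inE -prime_implicant_free // prime.
- case=> [/imsetP[t' ] | tSR].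
    rewrite inE => /andP[t'SR nimp] ->.
    have t'Nx : x \notin term_vars t'.
      by apply: SR_notin_term_vars t'SR; apply: restrict_depends_off.
    move: t'SR; rewrite inE => /andP[prime sat].
    rewrite inE /l prime_implicant_addlit // prime nimp.
    by rewrite sat_termU sat sat_term1 /sat_lit eqxx.
  have tNx := SR_notin_term_vars conj_off tSR.
  by move: tSR; rewrite !inE (prime_implicant_free f tNx).
Qed.
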